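(* Let $S>0$, let $D$ be a multiset of $n$ items with sizes in $(0,S]$, let $k\ge 1$ be an integer and $\epsilon\in(0,1/2]$. Consider the following algorithm. (1) Call an item small if its size is at most $\max\{1/n,\epsilon\}\cdot S$ and large otherwise; let $I$, $J$ be the multisets of small and large items. (2) Sort $J$ in non-increasing order of size and partition it into consecutive groups of $g=\lceil n(J)\epsilon^2\rceil$ items (the last group possibly smaller), where $n(J)=|J|$; round each item up to the largest size in its group; let $U'$ be the first group (the $g$ largest items) and $U''$ the instance formed by the remaining rounded items. (3) Put each of the $k$ copies of each item of $U'$ into its own bin. (4) Compute a feasible solution $\mathbf{x}$ of the fractional configuration linear program $F_k$ of $U''$ with $\mathbf{1}\cdot\mathbf{x}\le LIN(U''_k)+1$, and from it construct a $k$-times bin packing of $U''$ using at most $\mathbf{1}\cdot\mathbf{x}+\frac{m(U'')+k}{2}$ bins. (5) Replace each rounded item by its original item, obtaining a $k$-times bin packing of $J$. (6) Insert the $k$ copies of each small item one at a time, each into some existing bin where it fits and which contains no copy of the same item, opening a new bin only if no such bin exists. Then the number $bins(D_k)$ of bins produced satisfies $$bins(D_k)\le(1+2k\epsilon)\,OPT(D_k)+\frac{1}{2\epsilon^2}+(2k+1).$$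
   Context: For a multiset $D$ of items with sizes in $(0,S]$ and integer $k\ge1$, $D_k$ is the collection of $k$ copies of each item; a $k$-times bin packing assigns all copies to bins with total size at most $S$ per bin and no two copies of the same item in one bin; $OPT(D_k)$ is the minimum number of bins. For an instance $W$ with distinct sizes $c[1],\dots,c[m]$ ($m=m(W)$) occurring $n[1],\dots,n[m]$ times, a configuration is a vector $a\in\mathbb{Z}_{\ge0}^m$ with $a_i\le n[i]$ and $\sum_i a_ic[i]\le S$; let $A$ be the $m\times t$ matrix whose columns are all configurations and $\mathbf{n}=(n[1],\dots,n[m])$. The fractional configuration program $F_k$ of $W$ is: minimize $\mathbf{1}\cdot\mathbf{x}$ subject to $A\mathbf{x}=k\mathbf{n}$, $\mathbf{x}\in\mathbb{R}^t_{\ge0}$; its optimal value is $LIN(W_k)$. *)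

From HB Require Import structures.
From mathcomp Require Import all_boot all_order all_algebra.
From mathcomp Require Import boolp classical_sets reals.
Set Implicit Arguments. Unset Strict Implicit. Unset Printing Implicit Defensive.
Import Order.TTheory GRing.Theory Num.Theory.
Local Open Scope ring_scope.

Section Defs.
Variable R : realType.

(** Total size of the items in a bin.  A bin is a SET of items, since a
    k-times bin packing never puts two copies of the same item into one bin. *)
Definition load (T : finType) (sz : T -> R) (B : {set T}) : R :=
  \sum_(i in B) sz i.

Definition ktimes_packing (T : finType) (S : R) (sz : T -> R) (A : {set T})
    (k : nat) (P : seq {set T}) : Prop :=
  (forall B : {set T}, B \in P -> B \subset A /\ load sz B <= S) /\
  (forall i, i \in A -> count (fun B : {set T} => i \in B) P = k).

Definition OPT (T : finType) (S : R) (sz : T -> R) (A : {set T}) (k : nat) : R :=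
  inf [set (size P)%:R | P in [set P | ktimes_packing S sz A k P]]%classic.

(** Fractional configuration LP F_k of an instance W given as the multiset
    (sequence) of its item sizes. *)
Definition dsizes (W : seq R) : seq R := undup W.
Definition m_of (W : seq R) : nat := size (dsizes W).
Definition mult (W : seq R) (i : 'I_(m_of W)) : nat :=
  count_mem (nth 0 (dsizes W) i) W.

(** Candidate vectors a in Z_{>=0}^m (entries bounded by |W| >= n[i]). *)
Definition cvec (W : seq R) := {ffun 'I_(m_of W) -> 'I_(size W).+1}.

Definition is_config (S : R) (W : seq R) (a : cvec W) : bool :=
  [forall i, (a i <= mult i)%N] &&
  (\sum_i (a i : nat)%:R * nth 0 (dsizes W) i <= S).

(** x is a feasible solution of F_k (variables indexed by configurations;
    entries at non-configurations are forced to 0). *)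
Definition Fk_feasible (S : R) (W : seq R) (k : nat) (x : cvec W -> R) : Prop :=
  (forall a, 0 <= x a) /\
  (forall a, ~~ is_config S a -> x a = 0) /\
  (forall i, \sum_(a | is_config S a) (a i : nat)%:R * x a = (k * mult i)%:R).

Arguments Fk_feasible S W k x : clear implicits.

Definition Fk_obj (S : R) (W : seq R) (x : cvec W -> R) : R :=
  \sum_(a | is_config S a) x a.
Arguments Fk_obj S W x : clear implicits.

Definition LIN (S : R) (W : seq R) (k : nat) : R :=
  inf [set Fk_obj S W x | x in [set x | Fk_feasible S W k x]]%classic.

Inductive insert_run (T : finType) (S : R) (sz : T -> R) :
    seq {set T} -> seq T -> seq {set T} -> Prop :=
| ir_nil P : insert_run S sz P [::] P
| ir_old (P : seq {set T}) (j : nat) (i : T) s P' :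
    (j < size P)%N -> i \notin nth finset.set0 P j ->
    load sz (nth finset.set0 P j) + sz i <= S ->
    insert_run S sz (set_nth finset.set0 P j (i |: nth finset.set0 P j)%SET) s P' ->
    insert_run S sz P (i :: s) P'
| ir_new (P : seq {set T}) (i : T) s P' :
    (forall B : {set T}, B \in P -> i \in B \/ S < load sz B + sz i) ->
    insert_run S sz (rcons P [set i]%SET) s P' ->
    insert_run S sz P (i :: s) P'.

Definition alg_output (n : nat) (S : R) (D : 'I_n -> R) (k : nat) (eps : R)
    (Pfin : seq {set 'I_n}) : Prop :=
  let thr := Order.max (n%:R^-1) eps * S in
  let I := [set i | D i <= thr]%SET in
  let J := [set i | thr < D i]%SET in
  let g := `|Num.ceil (#|J|%:R * eps ^+ 2)|%N in
  exists ord : seq 'I_n,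
    [/\ perm_eq ord (enum J),
        sorted (fun a b => D b <= D a) ord &
        (* rounded size: size of the first (largest) item of its group *)
        let rnd i := D (nth i ord ((index i ord %/ g) * g)) in
        let U1 := [set i in J | (index i ord < g)%N]%SET in
        let U2 := [set i in J | (g <= index i ord)%N]%SET in
        let W2 := [seq rnd i | i <- enum U2] in
        exists (P4 : seq {set 'I_n}) (x : cvec W2 -> R),
          [/\ ktimes_packing S rnd U2 k P4,
              Fk_feasible S W2 k x,
              Fk_obj S W2 x <= LIN S W2 k + 1,
              (size P4)%:R <= Fk_obj S W2 x + ((m_of W2)%:R + k%:R) / 2 &
              exists ins : seq 'I_n,
                (forall i, count_mem i ins = if i \in I then k else 0%N) /\
                insert_run S D
                  (flatten (nseq k [seq [set i]%SET | i <- enum U1]) ++ P4)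
                  ins Pfin]].

End Defs.
Arguments Fk_feasible {R} S W k x.
Arguments Fk_obj {R} S W x.

(* Everything is compared with the volume bound k * sum D <= OPT(D_k) * S.
   Shifting each item of U'' to the item g places earlier in the sorted order of J is
   injective and does not decrease its rounded size, so every bin of a k-times packing of D
   induces a configuration of U''; hence LIN(U''_k) <= OPT(D_k).  Large items exceed eps*S,
   so the k*g <= k*(eps^2 |J| + 1) singleton bins of U' number at most eps*OPT + k, and the
   rounded sizes of U'' are group leaders, so m(U'') <= |J|/g <= 1/eps^2.  This bounds the
   bins present before step (6).  If step (6) opens a new bin for a small item i, each of
   the F bins without a copy of i is filled above S - size(i) >= (1 - max(1/n, eps)) * S,
   and summing volumes gives F <= (1 + 2k eps) OPT + k; fewer than k bins hold a copy of i. *)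

From HB Require Import structures.
From mathcomp Require Import all_boot all_order all_algebra.
From mathcomp Require Import boolp classical_sets reals.
From mathcomp Require Import zify ring lra.
Import Order.TTheory GRing.Theory Num.Theory.
Local Open Scope ring_scope.
Set Implicit Arguments. Unset Strict Implicit.

Lemma natr_count (R : pzSemiRingType) (I : Type) (p : pred I) (s : seq I) :
  (count p s)%:R = \sum_(x <- s) (p x)%:R :> R.
Proof. by rewrite -sum1_count natr_sum big_mkcond; apply: eq_bigr => x _; case: (p x). Qed.

Section Packings.
Variables (R : realType) (T : finType).
Implicit Types (S : R) (sz : T -> R) (A B : {set T}) (P Q : seq {set T}).

Definition copies P (i : T) : nat := count (fun B => i \in B) P.

Definition no_bin_accepts S sz P (i : T) : Prop :=
  forall B, B \in P -> i \in B \/ S < load sz B + sz i.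

Definition singletons A (k : nat) : seq {set T} :=
  flatten (nseq k [seq [set i]%SET | i <- enum A]).

Lemma size_singletons A k : size (singletons A k) = (k * #|A|)%N.
Proof. by elim: k => //= k IH; rewrite size_cat IH size_map -cardE mulSn. Qed.

Lemma copies_singletons A k i : copies (singletons A k) i = (k * (i \in A))%N.
Proof.
elim: k => [|k IH] //=; rewrite /copies count_cat -/(copies (singletons A k) i) IH mulSn.
congr (_ + _)%N; rewrite count_map -mem_enum -(count_uniq_mem _ (enum_uniq A)).
by apply: eq_count => j /=; rewrite finset.in_set1.
Qed.

Lemma ktimes_packing_copies S sz A k Q :
  ktimes_packing S sz A k Q -> forall i, copies Q i = if i \in A then k else 0%N.
Proof.
case=> Q_sub Q_copies i; case: ifPn => [/Q_copies //|i_notin_A].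
rewrite -(count_pred0 Q); apply: eq_in_count => B /Q_sub[B_sub _] /=.
by apply/negbTE; apply: contra i_notin_A; apply: (fintype.subsetP B_sub).
Qed.

Lemma sum_load sz Q : \sum_(B <- Q) load sz B = \sum_i (copies Q i)%:R * sz i.
Proof.
under eq_bigr => B _ do rewrite /load big_mkcond /=.
rewrite exchange_big /=; apply: eq_big => // i _.
rewrite /copies -sum1_count natr_sum mulr_suml [RHS]big_mkcond /=.
by apply: eq_bigr => B _; case: ifP; rewrite ?mul1r.
Qed.

Lemma ktimes_packing_volume S sz A k Q :
  ktimes_packing S sz A k Q -> k%:R * \sum_(i in A) sz i <= (size Q)%:R * S.
Proof.
move=> PQ; have [Q_sub _] := PQ.
have -> : k%:R * \sum_(i in A) sz i = \sum_(B <- Q) load sz B.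
  rewrite sum_load mulr_sumr big_mkcond /=; apply: eq_bigr => i _.
  by rewrite (ktimes_packing_copies PQ); case: ifP; rewrite ?mul0r.
rewrite -sum1_size natr_sum mulr_suml big_seq [X in _ <= X]big_seq.
by apply: ler_sum => B /Q_sub[_]; rewrite mul1r.
Qed.

Lemma singletons_ktimes_packing S sz A k : (forall i, i \in A -> sz i <= S) ->
  ktimes_packing S sz A k (singletons A k).
Proof.
move=> sz_le; split=> [B|i i_A]; last by move: (copies_singletons A k i); rewrite i_A muln1.
have mem_nseq m : B \in flatten (nseq m [seq [set i]%SET | i <- enum A]) ->
    B \in [seq [set i]%SET | i <- enum A].
  by elim: m => //= m IH; rewrite mem_cat => /orP[|/IH].
move=> /mem_nseq /mapP[i]; rewrite mem_enum => i_A ->.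
by rewrite finset.sub1set /load big_set1 i_A sz_le.
Qed.

Lemma le_OPT S sz A k (v : R) : (forall i, i \in A -> sz i <= S) ->
  (forall Q, ktimes_packing S sz A k Q -> v <= (size Q)%:R) -> v <= OPT S sz A k.
Proof.
move=> sz_le lb; apply: lb_le_inf => [|_ [Q PQ <-]]; last exact: lb.
by do 2 econstructor; first exact: (singletons_ktimes_packing k sz_le).
Qed.

Lemma OPT_volume S sz A k : 0 < S -> (forall i, i \in A -> sz i <= S) ->
  k%:R * \sum_(i in A) sz i <= OPT S sz A k * S.
Proof.
move=> S_gt0 sz_le; rewrite -ler_pdivrMr //; apply: le_OPT => // Q PQ.
by rewrite ler_pdivrMr //; apply: ktimes_packing_volume PQ.
Qed.

Lemma insert_run_size S sz k (small : pred T) (M : R) P s P' :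
  insert_run S sz P s P' ->
  (forall j, copies P j + count_mem j s = k)%N -> all small s ->
  (forall Q i, small i -> (forall j, copies Q j <= k)%N -> (copies Q i < k)%N ->
     no_bin_accepts S sz Q i -> (size Q).+1%:R <= M) ->
  (size P' <= size P)%N \/ (size P')%:R <= M.
Proof.
elim=> {P s P'} [P | P j i s P' lt_j i_notin _ _ IH | P i s P' no_room _ IH] total;
  [by left | move=> /= /andP[small_i small_s] new_le..].
- rewrite size_set_nth (maxn_idPr lt_j) in IH; apply: IH => // x.
  rewrite /copies count_set_nth_ltn // -/(copies P x) in_setU1.
  move: (total x) (total i) => /=; rewrite eqxx.
  by case: (eqVneq x i) => [->|_]; rewrite ?(negbTE i_notin) /=; lia.
- have size_le : (size P).+1%:R <= M.
    apply: new_le small_i _ _ no_room => [x|]; first by move: (total x) => /=; lia.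
    by move: (total i) => /=; rewrite eqxx; lia.
  case: IH => // [x | |]; first by move: (total x) => /=;
    rewrite /copies -cats1 count_cat /= finset.in_set1; case: (eqVneq i x); lia.
  + by rewrite size_rcons => le_size; right; apply: le_trans size_le; rewrite ler_nat.
  + by right.
Qed.

Lemma no_bin_accepts_count_lt S sz k Q i :
  (forall j, 0 <= sz j) -> (forall j, copies Q j <= k)%N -> no_bin_accepts S sz Q i ->
  (0 < count (fun B => i \notin B) Q)%N ->
  (count (fun B => i \notin B) Q)%:R * (S - sz i) < k%:R * (\sum_j sz j - sz i).
Proof.
move=> sz_ge0 copies_le no_room has_free.
pose Q' := filter (fun B : {set T} => i \notin B) Q.
apply: (@lt_le_trans _ _ (\sum_(B <- Q | i \notin B) load sz B)).
  rewrite -sum1_count natr_sum mulr_suml big_seq_cond [X in _ < X]big_seq_cond.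
  apply: ltr_sum => [|B /andP[B_Q i_notin_B]].
    move: has_free; rewrite -has_count => /hasP[B B_Q i_notin_B].
    by apply/hasP; exists B; rewrite ?B_Q.
  by rewrite mul1r; case: (no_room B B_Q) => [/[!(negbTE i_notin_B)]//|]; rewrite ltrBlDr.
rewrite -big_filter -/Q' sum_load (bigD1 i) //= [X in _ <= _ * (X - _)](bigD1 i) //=.
have -> : copies Q' i = 0%N.
  by rewrite /copies count_filter -(count_pred0 Q); apply: eq_count => B /=; rewrite andbN.
rewrite mul0r add0r addrC addrK mulr_sumr; apply: ler_sum => j _.
apply: ler_wpM2r => //; rewrite ler_nat (leq_trans _ (copies_le j)) //.
exact: leq_count_subseq (filter_subseq _ _).
Qed.

End Packings.

Section LinearGrouping.
Variables (R : realType) (T : finType) (sz : T -> R) (J : {set T}) (ord : seq T) (g : nat).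
Hypothesis ord_J : perm_eq ord (enum J).

Definition rounded (i : T) : R := sz (nth i ord (index i ord %/ g * g)).
Definition first_group : {set T} := [set i in J | (index i ord < g)%N].
Definition other_groups : {set T} := [set i in J | (g <= index i ord)%N].
Definition shift (i : T) : T := nth i ord (index i ord - g).

Local Notation W := [seq rounded i | i <- enum other_groups].

Lemma mem_ord i : (i \in ord) = (i \in J).
Proof. by rewrite (perm_mem ord_J) mem_enum. Qed.

Lemma size_ord : size ord = #|J|.
Proof. by rewrite (perm_size ord_J) cardE. Qed.

Lemma card_first_group : (#|first_group| <= g)%N.
Proof.
apply: (@leq_trans #|take g ord|); last first.
  by apply: leq_trans (card_size _) _; rewrite size_take geq_minl.
apply: subset_leq_card; apply/fintype.subsetP => i; rewrite inE => /andP[i_J lt_i_g].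
by rewrite in_take ?mem_ord.
Qed.

Lemma m_of_rounded_mul : (m_of W * g <= #|J|)%N.
Proof.
have [-> | g_gt0] := posnP g; first by rewrite muln0.
case E : (enum other_groups) => [|i0 rest]; rewrite -E; first by rewrite /m_of /dsizes E.
pose leaders := [seq sz (nth i0 ord (t * g)) | t <- iota 1 ((size ord).-1 %/ g)].
have sub : {subset undup W <= leaders}.
  move=> v; rewrite mem_undup => /mapP[i]; rewrite mem_enum inE => /andP[i_J le_g_i] ->.
  have lt_i : (index i ord < size ord)%N by rewrite index_mem mem_ord.
  apply/mapP; exists (index i ord %/ g)%N; last first.
    by rewrite /rounded (set_nth_default i0) // (leq_ltn_trans (leq_divM _ _)).
  rewrite mem_iota divn_gt0 // le_g_i add1n ltnS leq_div2r //; lia.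
have := uniq_leq_size (undup_uniq W) sub; rewrite size_map size_iota -size_ord => m_le.
by apply: leq_trans (leq_mul m_le (leqnn g)) _; rewrite (leq_trans (leq_divM _ _)) ?leq_pred.
Qed.

Hypothesis ord_sorted : sorted (fun a b => sz b <= sz a) ord.
Hypothesis g_gt0 : (0 < #|J|)%N -> (0 < g)%N.

Lemma other_groupsP i : i \in other_groups ->
  [/\ (0 < g)%N, (g <= index i ord)%N & (index i ord < size ord)%N].
Proof.
rewrite inE => /andP[i_J ->]; rewrite index_mem mem_ord i_J; split=> //.
by apply: g_gt0; apply/card_gt0P; exists i.
Qed.

Lemma shift_inj : {in other_groups &, injective shift}.
Proof.
move=> i j /other_groupsP[_ le_g_i lt_i] /other_groupsP[_ le_g_j lt_j].
have ord_uniq : uniq ord by rewrite (perm_uniq ord_J) enum_uniq.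
rewrite /shift (set_nth_default j i) ?(leq_ltn_trans (leq_subr _ _)) //.
move/eqP; rewrite nth_uniq ?(leq_ltn_trans (leq_subr _ _)) // => /eqP eq_sub.
by apply: (@index_inj _ i ord); rewrite ?inE -?index_mem //; lia.
Qed.

Lemma rounded_le_shift i : i \in other_groups -> rounded i <= sz (shift i).
Proof.
move=> /other_groupsP[g_gt0' le_g_i lt_i]; rewrite /rounded /shift.
have sz_tr : transitive (fun a b => sz b <= sz a) by move=> ? ? ? ? /le_trans; apply.
apply: (sorted_leq_nth sz_tr (fun a => lexx (sz a)) i ord_sorted); rewrite ?inE /=.
- lia.
- by rewrite (leq_ltn_trans (leq_divM _ _)).
- by have := ltn_ceil (index i ord) g_gt0'; lia.
Qed.

Variables (S : R) (k : nat).
Hypothesis sz_ge0 : forall i, 0 <= sz i.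

Definition class_count (B : {set T}) (c : 'I_(m_of W)) : nat :=
  \sum_(u in other_groups | rounded u == nth 0 (dsizes W) c) (shift u \in B).

Lemma mult_class_count c : mult c = class_count [set: T] c.
Proof.
rewrite /class_count (eq_bigr (fun _ => 1%N)) => [|u _]; last by rewrite finset.in_setT.
by rewrite -big_enum_cond sum1_count /mult count_map.
Qed.

Lemma class_count_le B c : (class_count B c <= mult c)%N.
Proof. by rewrite mult_class_count; apply: leq_sum => u _; rewrite finset.in_setT leq_b1. Qed.

Definition bin_config (B : {set T}) : cvec W := [ffun c => inord (class_count B c)].

Lemma bin_configE B c : bin_config B c = class_count B c :> nat.
Proof. by rewrite ffunE inordK // ltnS (leq_trans (class_count_le B c)) ?count_size. Qed.

Lemma sum_classes (F : T -> R) :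
  \sum_(c < m_of W) \sum_(u in other_groups | rounded u == nth 0 (dsizes W) c) F u =
  \sum_(u in other_groups) F u.
Proof.
under eq_bigr => c _ do rewrite big_mkcondr /=.
rewrite exchange_big /=; apply: eq_bigr => u u_other.
have -> : \sum_(c < m_of W) (if rounded u == nth 0 (dsizes W) c then F u else 0) =
    (count_mem (rounded u) (dsizes W))%:R * F u.
  rewrite -(big_mkord xpredT (fun c => if rounded u == nth 0 (dsizes W) c then F u else 0)).
  rewrite -(big_nth 0 xpredT (fun v => if rounded u == v then F u else 0)) -big_mkcond /=.
  rewrite -sum1_count natr_sum mulr_suml (eq_bigl (pred1 (rounded u))) => [|v].
    by apply: eq_bigr => v _; rewrite mul1r.
  exact: eq_sym.
by rewrite count_uniq_mem ?undup_uniq // mem_undup map_f ?mem_enum // mul1r.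
Qed.

Lemma bin_config_is_config B : load sz B <= S -> is_config S (bin_config B).
Proof.
move=> B_le; apply/andP; split.
  by apply/forallP => c; rewrite bin_configE class_count_le.
apply: le_trans B_le.
have -> : \sum_c (bin_config B c : nat)%:R * nth 0 (dsizes W) c =
    \sum_(u in other_groups) (shift u \in B)%:R * rounded u.
  rewrite -sum_classes; apply: eq_bigr => c _.
  by rewrite bin_configE natr_sum mulr_suml; apply: eq_bigr => u /andP[_ /eqP ->].
apply: (@le_trans _ _ (\sum_(u in other_groups | shift u \in B) sz (shift u))).
  rewrite [X in _ <= X]big_mkcondr /=; apply: ler_sum => u u_other.
  by case: (shift u \in B); rewrite ?mul0r ?mul1r ?rounded_le_shift.
rewrite -(big_imset_cond _ (fun j => j \in B) sz shift_inj) /load.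
rewrite [X in _ <= X]big_mkcond [X in X <= _]big_mkcond /=; apply: ler_sum => j _.
by case: (j \in B); rewrite ?andbT ?andbF //; case: ifP.
Qed.

Definition packing_solution (Q : seq {set T}) (a : cvec W) : R :=
  \sum_(B <- Q) (bin_config B == a)%:R.

Lemma sum_packing_solution Q (h : cvec W -> R) :
  (forall B, B \in Q -> load sz B <= S) ->
  \sum_(a | is_config S a) h a * packing_solution Q a = \sum_(B <- Q) h (bin_config B).
Proof.
move=> Q_le; under eq_bigr => a _ do rewrite mulr_sumr.
rewrite exchange_big /= big_seq [RHS]big_seq; apply: eq_bigr => B B_Q.
rewrite (bigD1 (bin_config B)) ?bin_config_is_config ?Q_le //= eqxx mulr1 big1 ?addr0 //.
by move=> a /andP[_ ne_a]; rewrite eq_sym (negbTE ne_a) mulr0.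
Qed.

Lemma packing_solution_feasible Q :
  ktimes_packing S sz [set: T] k Q -> Fk_feasible S W k (packing_solution Q).
Proof.
move=> PQ; have [Q_le Q_copies] := PQ.
have Q_le' B : B \in Q -> load sz B <= S by case/Q_le.
split=> [a|]; first by apply: sumr_ge0 => B _; rewrite ler0n.
split=> [a not_config | c].
  rewrite /packing_solution big_seq big1 // => B B_Q.
  by case: eqP => // eq_a; rewrite -eq_a bin_config_is_config ?Q_le' in not_config.
rewrite (sum_packing_solution (fun a => (a c : nat)%:R) Q_le').
under eq_bigr => B _ do rewrite bin_configE natr_sum.
rewrite exchange_big /= mult_class_count /class_count big_distrr natr_sum /=.
apply: eq_bigr => u _; rewrite -natr_count finset.in_setT muln1.
by rewrite (Q_copies (shift u)) ?finset.in_setT.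
Qed.

Lemma packing_solution_obj Q :
  ktimes_packing S sz [set: T] k Q -> Fk_obj S W (packing_solution Q) = (size Q)%:R.
Proof.
case=> Q_le _; have := sum_packing_solution (fun _ => 1) (fun B B_Q => (Q_le B B_Q).2).
under eq_bigr => a _ do rewrite mul1r.
by rewrite /Fk_obj => ->; rewrite -sum1_size natr_sum.
Qed.

Lemma LIN_rounded_le Q : ktimes_packing S sz [set: T] k Q -> LIN S W k <= (size Q)%:R.
Proof.
move=> PQ; rewrite -(packing_solution_obj PQ); apply: ge_inf.
  by exists 0 => _ [x [x_ge0 _] <-]; apply: sumr_ge0 => a _.
by exists (packing_solution Q); first exact: packing_solution_feasible.
Qed.

End LinearGrouping.

Section BlockedBins.
Variable R : realFieldType.
Implicit Types S F O Y d e kk nn : R.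

Lemma blocked_bins_le_eps S F O d e kk :
  0 < S -> 0 < e <= 1 / 2 -> 1 <= kk -> 0 <= F -> 0 <= O ->
  d <= e * S -> F * (S - d) <= O * S -> F <= (1 + 2 * kk * e) * O.
Proof.
move=> S_gt0 /andP[e_gt0 e_le] kk_ge1 F_ge0 O_ge0 d_le FS_le.
have F_le : F * (1 - e) <= O.
  by rewrite -(ler_pM2r S_gt0); apply: le_trans FS_le; nra.
have : 0 <= F * e * (1 - 2 * e) by apply: mulr_ge0; [apply: mulr_ge0 | lra]; lra.
have : 0 <= 2 * e * O * (kk - 1) by apply: mulr_ge0; [apply: mulr_ge0 | lra]; nra.
nra.
Qed.

Lemma blocked_bins_lt_inv_n S F O Y d kk nn :
  0 < S -> 1 <= nn -> 0 <= F -> nn * d <= S ->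
  F * (S - d) < Y -> Y <= O * S -> Y <= kk * (nn - 1) * S -> F < O + kk.
Proof.
move=> S_gt0 nn_ge1 F_ge0 nd_le FS_lt Y_le_O Y_le_kk.
have lhs : F * (nn - 1) * S < nn * Y.
  have : F * (nn - 1) * S <= nn * (F * (S - d)).
    have gap : nn * (F * (S - d)) - F * (nn - 1) * S = F * (S - nn * d) by ring.
    by rewrite -subr_ge0 gap mulr_ge0 // subr_ge0.
  by move/le_lt_trans; apply; rewrite ltr_pM2l //; lra.
have nn_gt1 : 1 < nn.
  rewrite lt_neqAle nn_ge1 andbT; apply/eqP => nn1.
  by move: lhs Y_le_kk; rewrite -nn1 subrr mulr0 mul0r mul1r mulr0 mul0r; lra.
rewrite -(ltr_pM2r S_gt0) -(ltr_pM2l (_ : 0 < nn - 1)); [nra | lra].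
Qed.

End BlockedBins.

Section Algorithm.
Variables (R : realType) (n : nat) (S : R) (D : 'I_n -> R) (k : nat) (eps : R).
Hypotheses (S_gt0 : 0 < S) (D_gt0 : forall i, 0 < D i) (D_le : forall i, D i <= S).
Hypotheses (k_gt0 : (0 < k)%N) (eps_gt0 : 0 < eps) (eps_le : eps <= 1 / 2).

Definition threshold : R := Order.max n%:R^-1 eps * S.
Definition small_items : {set 'I_n} := [set i | D i <= threshold].
Definition large_items : {set 'I_n} := [set i | threshold < D i].
Definition group_size : nat := `|Num.ceil (#|large_items|%:R * eps ^+ 2)|%N.

Local Notation OPT_D := (OPT S D [set: 'I_n] k).
Local Notation target :=
  ((1 + 2 * k%:R * eps) * OPT_D + 1 / (2 * eps ^+ 2) + (2 * k + 1)%:R).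

Lemma volume_le_OPT : k%:R * \sum_i D i <= OPT_D * S.
Proof.
have := OPT_volume (A := [set: 'I_n]) k S_gt0 (fun i _ => D_le i).
by rewrite (eq_bigl _ _ (@finset.in_setT _)).
Qed.

Lemma OPT_ge0 : 0 <= OPT_D.
Proof.
rewrite -(pmulr_lge0 _ S_gt0); apply: le_trans volume_le_OPT.
by apply: mulr_ge0; [rewrite ler0n | apply: sumr_ge0 => i _; apply: ltW].
Qed.

Lemma large_items_le_OPT : k%:R * #|large_items|%:R * eps <= OPT_D.
Proof.
rewrite -(ler_pM2r S_gt0); apply: le_trans volume_le_OPT.
rewrite -!mulrA ler_wpM2l // -sumr_const mulr_suml.
apply: le_trans (_ : \sum_(i in large_items) D i <= _); last first.
  by rewrite [leRHS](bigID (mem large_items)) /= lerDl sumr_ge0 // => i _; apply: ltW.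
apply: ler_sum => i; rewrite inE mul1r => /ltW; apply: le_trans.
by rewrite ler_wpM2r ?(ltW S_gt0) // le_max lexx orbT.
Qed.

Lemma group_size_gt0 : (0 < #|large_items|)%N -> (0 < group_size)%N.
Proof.
by move=> J_gt0; rewrite absz_gt0 ceil_neq0 mulr_gt0 ?orbT ?ltr0n ?exprn_gt0.
Qed.

Lemma group_sizeE : group_size%:R = (Num.ceil (#|large_items|%:R * eps ^+ 2))%:~R :> R.
Proof.
rewrite natr_absz ger0_norm // ceil_ge0 (lt_le_trans (_ : -1 < 0)) ?ltrN10 //.
by rewrite mulr_ge0 ?ler0n ?exprn_ge0 ?ltW.
Qed.

Lemma group_size_le : group_size%:R <= #|large_items|%:R * eps ^+ 2 + 1 :> R.
Proof.
by have := ceilB1_lt (#|large_items|%:R * eps ^+ 2); rewrite intrB -group_sizeE; lra.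
Qed.

Lemma group_size_ge : #|large_items|%:R * eps ^+ 2 <= group_size%:R :> R.
Proof. by rewrite group_sizeE ceil_ge. Qed.

Section Grouping.
Variable ord : seq 'I_n.
Hypothesis ord_J : perm_eq ord (enum large_items).

Local Notation U1 := (first_group large_items ord group_size).
Local Notation U2 := (other_groups large_items ord group_size).
Local Notation W := [seq rounded D ord group_size i | i <- enum U2].

Lemma m_of_rounded_le : (m_of W)%:R <= 1 / eps ^+ 2.
Proof.
have [J0 | J_gt0] := posnP #|large_items|.
  suff -> : m_of W = 0%N by rewrite divr_ge0 ?exprn_ge0 ?ltW.
  apply/eqP; rewrite -leqn0 -J0 (leq_trans (size_undup _)) // size_map -cardE.
  by apply: subset_leq_card; apply/fintype.subsetP => i; rewrite inE => /andP[].
have m_le := m_of_rounded_mul D group_size ord_J; rewrite -(@ler_nat R) natrM in m_le.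
rewrite ler_pdivlMr ?exprn_gt0 // -(ler_pM2r (_ : 0 < #|large_items|%:R)) ?ltr0n //.
rewrite mul1r; apply: le_trans m_le; rewrite -mulrA ler_wpM2l ?ler0n //.
by rewrite mulrC group_size_ge.
Qed.

Hypothesis ord_sorted : sorted (fun a b => D b <= D a) ord.

Lemma LIN_le_OPT : LIN S W k <= OPT_D.
Proof.
apply: le_OPT => [i _ | Q]; first exact: D_le.
exact/(LIN_rounded_le ord_J ord_sorted group_size_gt0 (fun i => ltW (D_gt0 i))).
Qed.

Lemma initial_bins_le (P4 : seq {set 'I_n}) (x : cvec W -> R) :
  Fk_obj S W x <= LIN S W k + 1 ->
  (size P4)%:R <= Fk_obj S W x + ((m_of W)%:R + k%:R) / 2 ->
  (k * #|U1| + size P4)%:R <= target.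
Proof.
move=> x_le P4_le; have O_ge0 := OPT_ge0.
have kU1_le : (k * #|U1|)%:R <= eps * OPT_D + k%:R.
  rewrite natrM; apply: le_trans (_ : k%:R * group_size%:R <= _).
    by rewrite ler_wpM2l ?ler_nat ?card_first_group.
  have := ler_wpM2l (ler0n R k) group_size_le.
  have := ler_wpM2l (ltW eps_gt0) large_items_le_OPT.
  rewrite expr2; lra.
have m_le := m_of_rounded_le; have := LIN_le_OPT.
have e_le : 1 / eps ^+ 2 / 2 = 1 / (2 * eps ^+ 2).
  by field; rewrite gt_eqF.
have : eps * OPT_D <= 2 * k%:R * eps * OPT_D.
  have k_ge1 : 1 <= k%:R :> R by rewrite ler1n.
  have := mulr_ge0 (ltW eps_gt0) O_ge0; nra.
have k_ge0 : 0 <= k%:R :> R by rewrite ler0n.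
rewrite natrM in kU1_le; rewrite !natrD !natrM; lra.
Qed.

End Grouping.

Lemma item_partition ord j :
  ((j \in small_items) + (j \in first_group large_items ord group_size) +
   (j \in other_groups large_items ord group_size))%N = 1%N.
Proof. by rewrite !inE; case: leP => //= _; case: ltnP. Qed.

Lemma sum_others_le i : \sum_j D j - D i <= (n%:R - 1) * S.
Proof.
rewrite (bigD1 i) //= addrC addrK.
apply: le_trans (_ : \sum_(j | j != i) S <= _); first exact: ler_sum.
have n_gt0 : (0 < n)%N := leq_ltn_trans (leq0n i) (ltn_ord i).
by rewrite sumr_const cardC1 card_ord -[X in X <= _]mulr_natl -subn1 natrB.
Qed.

Lemma blocked_count_le (F : nat) i :
  i \in small_items -> F%:R * (S - D i) < k%:R * (\sum_j D j - D i) ->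
  F%:R <= (1 + 2 * k%:R * eps) * OPT_D + k%:R.
Proof.
move=> i_small blocked; have O_ge0 := OPT_ge0.
have k_ge1 : 1 <= k%:R :> R by rewrite ler1n.
have O_le : OPT_D <= (1 + 2 * k%:R * eps) * OPT_D.
  have := mulr_ge0 (mulr_ge0 (ler0n R (2 * k)) (ltW eps_gt0)) O_ge0; rewrite natrM; lra.
have Y_le_O : k%:R * (\sum_j D j - D i) <= OPT_D * S.
  by apply: le_trans volume_le_OPT; rewrite ler_wpM2l ?ler0n // gerBl ltW.
have Y_le_n : k%:R * (\sum_j D j - D i) <= k%:R * (n%:R - 1) * S.
  by rewrite -mulrA ler_wpM2l ?ler0n ?sum_others_le.
move: i_small; rewrite inE /threshold; case: (leP n%:R^-1 eps) => [_ | eps_lt] d_le.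
  have := blocked_bins_le_eps S_gt0 (introT andP (conj eps_gt0 eps_le)) k_ge1 (ler0n _ _)
    O_ge0 d_le (ltW (lt_le_trans blocked Y_le_O)); lra.
have n_gt0 : (0 < n)%N := leq_ltn_trans (leq0n i) (ltn_ord i).
have nd_le : n%:R * D i <= S by rewrite -ler_pdivlMl ?ltr0n // mulrC.
have := blocked_bins_lt_inv_n S_gt0 (_ : 1 <= n%:R) (ler0n _ _) nd_le blocked Y_le_O Y_le_n.
by rewrite ler1n => /(_ n_gt0); lra.
Qed.

Lemma new_bin_le (Q : seq {set 'I_n}) i :
  i \in small_items -> (forall j, copies Q j <= k)%N -> (copies Q i < k)%N ->
  no_bin_accepts S D Q i -> (size Q).+1%:R <= target.
Proof.
move=> i_small copies_le copies_i_lt no_room.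
set F := count (fun B : {set 'I_n} => i \notin B) Q.
have size_Q : size Q = (copies Q i + F)%N by rewrite /copies /F count_predC.
have F_le : F%:R <= (1 + 2 * k%:R * eps) * OPT_D + k%:R.
  have [F0 | F_gt0] := posnP F; last first.
    apply: blocked_count_le i_small _.
    exact: no_bin_accepts_count_lt (fun j => ltW (D_gt0 j)) copies_le no_room F_gt0.
  by rewrite F0 addr_ge0 ?ler0n // mulr_ge0 ?OPT_ge0 // addr_ge0 // !mulr_ge0 ?ler0n ?ltW.
clearbody F; have inv_ge0 : 0 <= 1 / (2 * eps ^+ 2).
  by rewrite divr_ge0 ?mulr_ge0 ?exprn_ge0 ?ltW.
apply: (@le_trans _ _ (k%:R + F%:R)); first by rewrite -natrD ler_nat size_Q -addSn leq_add2r.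
by rewrite natrD natrM; lra.
Qed.

End Algorithm.

Theorem theorem5 (R : realType) (S : R) (n : nat) (D : 'I_n -> R) (k : nat)
    (eps : R) (P : seq {set 'I_n}) :
  0 < S ->
  (forall i, 0 < D i <= S) ->
  (0 < k)%N ->
  0 < eps <= 1 / 2 ->
  alg_output S D k eps P ->
  (size P)%:R <= (1 + 2 * k%:R * eps) * OPT S D [set: 'I_n] k
                 + 1 / (2 * eps ^+ 2) + (2 * k + 1)%:R.
Proof.
move=> S_gt0 D_range k_gt0 /andP[eps_gt0 eps_le].
move=> [ord [ord_J ord_sorted [P4 [x [P4_pack _ x_le P4_le [ins [ins_count run]]]]]]].
have D_gt0 i : 0 < D i by case/andP: (D_range i).
have D_le i : D i <= S by case/andP: (D_range i).
pose U1 := first_group (large_items S D eps) ord (group_size S D eps).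
have copies_total j : (copies (singletons U1 k ++ P4) j + count_mem j ins)%N = k.
  rewrite /copies count_cat -!/(copies _ j) copies_singletons.
  rewrite (ktimes_packing_copies P4_pack) ins_count.
  have := item_partition S D eps ord j.
  by do 3!case: (_ \in _) => //=; rewrite ?muln0 ?muln1 ?addn0.
have ins_small : all (fun j => j \in small_items S D eps) ins.
  apply/allP => j j_ins; apply/negPn/negP => j_large.
  by move: (ins_count j) => /=; rewrite (negbTE j_large) => /count_memPn; rewrite j_ins.
have new_le := new_bin_le S_gt0 D_gt0 D_le k_gt0 eps_gt0 eps_le.
have [size_le | //] := insert_run_size run copies_total ins_small new_le.
apply: le_trans (initial_bins_le S_gt0 D_gt0 D_le k_gt0 eps_gt0 ord_J ord_sorted x_le P4_le).
by rewrite ler_nat (leq_trans size_le) // size_cat size_singletons.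
Qed.
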